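(* Consider the algorithm described below (Algorithm A) for a real Hilbert space $H$, a nonempty closed convex set $C\subseteq H$ and a mapping $F\colon H\to H$ that is monotone and Lipschitz continuous with constant $L>0$, where the variational inequality ''find $x^*\in C$ with $\langle F(x^* ),x-x^*\rangle\ge0$ for all $x\in C$'' has nonempty solution set $S$. Suppose that at some iteration $n\ge1$ the algorithm reaches Step 4(ii), i.e. $t_n>0$ and $\lambda_n<\lambda_{n-1}$. Then there exists $\theta_n'\in(0,1]$ such that, with $y_n'=x_n+\theta_n'(x_n-x_{n-1})$, one has $\lambda(y_n',\theta_n')\ge\theta_n'\lambda_{n-1}$, and there exists $\lambda_n'\in[\theta_n'\lambda_{n-1},\lambda(y_n',\theta_n')]$ with $\|\lambda_n'F(y_n')-\theta_n'\lambda_{n-1}F(y_{n-1})\|\le\alpha\|y_n'-y_{n-1}\|$ (so Step 4(ii) is well-defined).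
   Context: Convention: $0/0=+\infty$ and $1/0=+\infty$. $P_C$ is the metric projection onto $C$. Algorithm A: Step 1. Choose $x_0\in C$, $\lambda_{-1}>0$, $\theta_0=1$, $\alpha\in(0,\sqrt2-1)$ and $\bar\lambda>0$. Compute $y_0=P_C(x_0-\lambda_{-1}F(x_0))$, $\lambda_0=\min\{\alpha\|x_0-y_0\|/\|F(x_0)-F(y_0)\|,\bar\lambda\}$, $x_1=P_C(x_0-\lambda_0F(y_0))$. Step 2 (for $n\ge1$). Set $\theta_n=1$ and define, for $y\in H$, $\theta>0$, $\lambda(y,\theta)=\min\{\alpha\|y-y_{n-1}\|/\|F(y)-F(y_{n-1})\|,\ \frac{1+\theta_{n-1}}{\theta}\lambda_{n-1},\ \bar\lambda\}$. Compute $y_n=2x_n-x_{n-1}$, $\lambda_n=\lambda(y_n,\theta_n)$, $x_{n+1}=P_C(x_n-\lambda_nF(y_n))$. Step 3. If $\|y_n-P_C(x_n-\lambda_nF(y_n))\|+\|x_n-y_n\|=0$, stop ($x_n$ is a solution). Otherwise compute $t_n=-\|x_{n+1}-x_n\|^2+2\lambda_n\langle F(y_n),y_n-x_{n+1}\rangle+(1-\alpha(1+\sqrt2))\|x_n-y_n\|^2-\alpha\|x_n-y_{n-1}\|^2+(1-\sqrt2\alpha)\|x_{n+1}-y_n\|^2$. Step 4. If $t_n\le0$, go to Step 2 with $n:=n+1$. Otherwise: (i) if $\lambda_n\ge\lambda_{n-1}$, choose $\lambda_n'\in[\lambda_{n-1},\lambda_n]$ with $\|\lambda_n'F(y_n)-\lambda_{n-1}F(y_{n-1})\|\le\alpha\|y_n-y_{n-1}\|$,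 recompute $x_{n+1}=P_C(x_n-\lambda_n'F(y_n))$, set $\lambda_n:=\lambda_n'$, $n:=n+1$, go to Step 2; (ii) if $\lambda_n<\lambda_{n-1}$, find $\theta_n'\in(0,1]$ such that, with $y_n'=x_n+\theta_n'(x_n-x_{n-1})$, one has $\lambda(y_n',\theta_n')\ge\theta_n'\lambda_{n-1}$; then choose $\lambda_n'\in[\theta_n'\lambda_{n-1},\lambda(y_n',\theta_n')]$ with $\|\lambda_n'F(y_n')-\theta_n'\lambda_{n-1}F(y_{n-1})\|\le\alpha\|y_n'-y_{n-1}\|$, recompute $x_{n+1}=P_C(x_n-\lambda_n'F(y_n'))$, set $\lambda_n:=\lambda_n'$, $\theta_n:=\theta_n'$, $y_n:=y_n'$, $n:=n+1$, go to Step 2. *)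

From HB Require Import structures.
From mathcomp Require Import all_boot all_order all_algebra.
From mathcomp Require Import all_classical all_reals.
From mathcomp Require Import topology normedtype.
Set Implicit Arguments. Unset Strict Implicit. Unset Printing Implicit Defensive.
Import Order.TTheory GRing.Theory Num.Theory.
Import numFieldNormedType.Exports.
Local Open Scope classical_set_scope.
Local Open Scope ring_scope.

Section Defs.
Variables (R : realType) (H : completeNormedModType R).

(* [ip] is an inner product inducing the norm of H; together with the
   completeness of H this makes H a real Hilbert space. *)
Definition is_inner_product (ip : H -> H -> R) : Prop :=
  [/\ (forall x y, ip x y = ip y x),
      (forall (a : R) x y z, ip (a *: x + y) z = a * ip x z + ip y z) &
      (forall x, `|x| ^+ 2 = ip x x)].

Definition convex_set (C : set H) : Prop :=
  forall x y (t : R), C x -> C y -> 0 <= t <= 1 -> C (t *: x + (1 - t) *: y).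

Definition monotone_op (ip : H -> H -> R) (F : H -> H) : Prop :=
  forall x y, 0 <= ip (F x - F y) (x - y).

Definition lipschitz_op (L : R) (F : H -> H) : Prop :=
  forall x y, `|F x - F y| <= L * `|x - y|.

Definition VI_sol (ip : H -> H -> R) (C : set H) (F : H -> H) : set H :=
  [set xs | C xs /\ forall x, C x -> 0 <= ip (F xs) (x - xs)].

(* metric projection onto C: the (unique, when C is nonempty closed convex in a
   Hilbert space) nearest point of C to z *)
Definition metric_proj (C : set H) (z : H) : H :=
  xget 0 [set p | C p /\ forall c, C c -> `|z - p| <= `|z - c|].

(* min{ a / d , m } with the conventions 0/0 = 1/0 = +oo *)
Definition min_ratio (a d m : R) : R :=
  if d == 0 then m else Num.min (a / d) m.

(* lambda(y, theta) of Step 2, with previous data yp = y_{n-1},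
   lp = lambda_{n-1}, thp = theta_{n-1} *)
Definition lamfun (F : H -> H) (alpha lambar : R) (yp : H) (lp thp : R)
  (y : H) (th : R) : R :=
  min_ratio (alpha * `|y - yp|) `|F y - F yp| (Num.min ((1 + thp) / th * lp) lambar).

(* t_n of Step 3; xn = x_n, xn1 = x_{n+1}, yn = y_n, yp = y_{n-1}, l = lambda_n *)
Definition algA_t (ip : H -> H -> R) (F : H -> H) (alpha : R) (xn xn1 yn yp : H) (l : R) : R :=
  - `|xn1 - xn| ^+ 2 + 2 * l * ip (F yn) (yn - xn1)
  + (1 - alpha * (1 + Num.sqrt 2)) * `|xn - yn| ^+ 2
  - alpha * `|xn - yp| ^+ 2
  + (1 - Num.sqrt 2 * alpha) * `|xn1 - yn| ^+ 2.

(* Step 1 of Algorithm A. [lam k] is lambda_k (k >= 0), [lamm1] is lambda_{-1}. *)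
Definition step1 (C : set H) (F : H -> H) (alpha lambar lamm1 : R)
  (x y : nat -> H) (lam theta : nat -> R) : Prop :=
  C (x 0%N) /\ 0 < lamm1 /\ theta 0%N = 1 /\ 0 < alpha < Num.sqrt 2 - 1 /\ 0 < lambar /\
  y 0%N = metric_proj C (x 0%N - lamm1 *: F (x 0%N)) /\
  lam 0%N = min_ratio (alpha * `|x 0%N - y 0%N|) `|F (x 0%N) - F (y 0%N)| lambar /\
  x 1%N = metric_proj C (x 0%N - lam 0%N *: F (y 0%N)).

(* Iteration k >= 1 (Steps 2--4) was carried out without stopping, and the
   sequences hold the final (possibly recomputed) values x_{k+1}, y_k,
   lambda_k, theta_k. *)
Definition iter_done (ip : H -> H -> R) (C : set H) (F : H -> H) (alpha lambar : R)
  (x y : nat -> H) (lam theta : nat -> R) (k : nat) : Prop :=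
  let lf := lamfun F alpha lambar (y k.-1) (lam k.-1) (theta k.-1) in
  let y0 := 2 *: x k - x k.-1 in
  let l0 := lf y0 1 in
  let p0 := metric_proj C (x k - l0 *: F y0) in
  `|y0 - p0| + `|x k - y0| != 0 /\
  let t := algA_t ip F alpha (x k) p0 y0 (y k.-1) l0 in
  (* Step 4, t_k <= 0: keep the Step 2 values *)
  (  (t <= 0 /\ y k = y0 /\ lam k = l0 /\ theta k = 1 /\ x k.+1 = p0)
  (* Step 4(i) *)
  \/ (0 < t /\ lam k.-1 <= l0 /\ y k = y0 /\ theta k = 1 /\
       lam k.-1 <= lam k <= l0 /\
       `|lam k *: F y0 - lam k.-1 *: F (y k.-1)| <= alpha * `|y0 - y k.-1| /\
       x k.+1 = metric_proj C (x k - lam k *: F y0))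
  (* Step 4(ii) *)
  \/ (0 < t /\ l0 < lam k.-1 /\ 0 < theta k <= 1 /\
       y k = x k + theta k *: (x k - x k.-1) /\
       theta k * lam k.-1 <= lf (y k) (theta k) /\
       theta k * lam k.-1 <= lam k <= lf (y k) (theta k) /\
       `|lam k *: F (y k) - (theta k * lam k.-1) *: F (y k.-1)|
          <= alpha * `|y k - y k.-1| /\
       x k.+1 = metric_proj C (x k - lam k *: F (y k)))).

End Defs.

From HB Require Import structures.
From mathcomp Require Import all_boot all_order all_algebra.
From mathcomp Require Import all_classical all_reals.
From mathcomp Require Import topology normedtype.
From mathcomp Require Import lra.
Import Order.TTheory GRing.Theory Num.Theory.
Import numFieldNormedType.Exports.
Local Open Scope classical_set_scope.
Local Open Scope ring_scope.

(* Along the run every step size lambda_k is positive and every theta_k is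
   positive.  Hence theta := min (1, alpha / (L lambda_{n-1}), lambar / lambda_{n-1})
   is admissible, and lambda' := theta lambda_{n-1} works: it lies below each
   term of the minimum defining lambda(y', theta), and by Lipschitz continuity
   theta lambda_{n-1} |F y' - F y_{n-1}| <= alpha |y' - y_{n-1}|. *)

Section LipschitzStepSize.
Context {R : realType} {H : completeNormedModType R}.
Context {F : H -> H} {L alpha : R}.
Hypothesis lipF : lipschitz_op L F.

Lemma lipschitz_op_dist_gt0 u v : `|F u - F v| != 0 -> 0 < `|u - v|.
Proof.
move=> Fuv; rewrite lt_neqAle normr_ge0 andbT eq_sym; apply: contraNneq Fuv => uv0.
by rewrite eq_le normr_ge0 andbT (le_trans (lipF u v)) // uv0 mulr0.
Qed.

Lemma lipschitz_op_scaled_dist (c : R) u v : 0 <= c -> c * L <= alpha ->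
  `|c *: F u - c *: F v| <= alpha * `|u - v|.
Proof.
move=> c0 cL; rewrite -scalerBr normrZ ger0_norm //.
have := lipF u v; have := normr_ge0 (u - v); have := normr_ge0 (F u - F v).
nra.
Qed.

Lemma min_ratio_lipschitz_gt0 (m : R) u v : 0 < alpha -> 0 < m ->
  0 < min_ratio (alpha * `|u - v|) `|F u - F v| m.
Proof.
move=> alpha0 m0; rewrite /min_ratio; case: ifPn => // Fuv.
have Fuv0 : 0 < `|F u - F v| by rewrite lt_neqAle eq_sym Fuv normr_ge0.
by rewrite lt_min m0 andbT divr_gt0 // mulr_gt0 // lipschitz_op_dist_gt0.
Qed.

Lemma min_ratio_lipschitz_ge (c m : R) u v : 0 <= c -> c * L <= alpha -> c <= m ->
  c <= min_ratio (alpha * `|u - v|) `|F u - F v| m.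
Proof.
move=> c0 cL cm; rewrite /min_ratio; case: ifPn => // Fuv.
rewrite le_min cm andbT ler_pdivlMr; last by rewrite lt_neqAle eq_sym Fuv normr_ge0.
by have := lipschitz_op_scaled_dist c u v c0 cL; rewrite -scalerBr normrZ ger0_norm.
Qed.

End LipschitzStepSize.

Lemma exists_damping {R : realFieldType} {a b l : R} : 0 < a -> 0 < b -> 0 < l ->
  exists2 th, 0 < th <= 1 & th * l <= a /\ th * l <= b.
Proof.
move=> a0 b0 l0; exists (Num.min 1 (Num.min (a / l) (b / l))).
  by rewrite !lt_min ltr01 !divr_gt0 //= ge_min lexx.
by split; rewrite -ler_pdivlMr // !ge_min lexx !orbT.
Qed.

Section AlgorithmInvariant.
Context {R : realType} {H : completeNormedModType R}.
Context {ip : H -> H -> R} {C : set H} {F : H -> H} {L alpha lambar : R}.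
Context {x y : nat -> H} {lam theta : nat -> R}.
Hypotheses (lipF : lipschitz_op L F) (alpha0 : 0 < alpha) (lambar0 : 0 < lambar).

Lemma iter_done_lam_theta_gt0 k : 0 < lam k.-1 -> 0 < theta k.-1 ->
  iter_done ip C F alpha lambar x y lam theta k -> 0 < lam k /\ 0 < theta k.
Proof.
move=> lam0 theta0 [_ [[_ [_ [-> [-> _]]]] | [[_ [_ [_ [-> [/andP[lamk _] _]]]]] |
  [_ [_ [/andP[thk _] [_ [_ [/andP[lamk _] _]]]]]]]]].
- split=> //; apply: min_ratio_lipschitz_gt0 => //.
  by rewrite lt_min lambar0 andbT divr1 mulr_gt0 // ltr_wpDr ?ltW.
- by split; [exact: lt_le_trans lamk | exact: ltr01].
- by split=> //; apply: lt_le_trans lamk; rewrite mulr_gt0.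
Qed.

Lemma algA_lam_theta_gt0 {lamm1 : R} {n : nat} :
  step1 C F alpha lambar lamm1 x y lam theta ->
  (forall k, (1 <= k < n)%N -> iter_done ip C F alpha lambar x y lam theta k) ->
  forall k, (k < n)%N -> 0 < lam k /\ 0 < theta k.
Proof.
move=> [_ [_ [theta_0 [_ [_ [_ [lam_0 _]]]]]]] iter.
elim=> [|k IH] kn.
  by split; [rewrite lam_0; apply: min_ratio_lipschitz_gt0 | rewrite theta_0].
have [lamk thetak] := IH (ltnW kn).
by apply: iter_done_lam_theta_gt0 => //; apply: iter; rewrite kn.
Qed.

End AlgorithmInvariant.

Theorem lemma4p4 (R : realType) (H : completeNormedModType R)
  (ip : H -> H -> R) (C : set H) (F : H -> H) (L : R)
  (alpha lambar lamm1 : R) (x y : nat -> H) (lam theta : nat -> R) (n : nat) :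
  is_inner_product ip ->
  C !=set0 -> closed C -> convex_set C ->
  monotone_op ip F -> 0 < L -> lipschitz_op L F ->
  VI_sol ip C F !=set0 ->
  step1 C F alpha lambar lamm1 x y lam theta ->
  (1 <= n)%N ->
  (forall k, (1 <= k < n)%N -> iter_done ip C F alpha lambar x y lam theta k) ->
  (* Steps 2--3 at iteration n, reaching Step 4(ii) *)
  let lf := lamfun F alpha lambar (y n.-1) (lam n.-1) (theta n.-1) in
  let yn := 2 *: x n - x n.-1 in
  let ln := lf yn 1 in
  let pn := metric_proj C (x n - ln *: F yn) in
  `|yn - pn| + `|x n - yn| != 0 ->
  0 < algA_t ip F alpha (x n) pn yn (y n.-1) ln ->
  ln < lam n.-1 ->
  exists2 th : R, 0 < th <= 1 &
    let yn' := x n + th *: (x n - x n.-1) in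
    th * lam n.-1 <= lf yn' th /\
    exists2 l : R, th * lam n.-1 <= l <= lf yn' th &
      `|l *: F yn' - (th * lam n.-1) *: F (y n.-1)| <= alpha * `|yn' - y n.-1|.
Proof.
move=> _ _ _ _ _ L0 lipF _ s1 n1 iter lf yn ln pn _ _ _.
have [_ [_ [_ [/andP[alpha0 _] [lambar0 _]]]]] := s1.
have [lam0 theta0] : 0 < lam n.-1 /\ 0 < theta n.-1.
  by apply: (algA_lam_theta_gt0 lipF alpha0 lambar0 s1 iter); rewrite ltn_predL.
have [th /andP[th0 th1] [thL thb]] :=
  exists_damping (divr_gt0 alpha0 L0) lambar0 lam0.
have thlam0 : 0 <= th * lam n.-1 by rewrite mulr_ge0 ?ltW.
have thlamL : th * lam n.-1 * L <= alpha by rewrite -ler_pdivlMr.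
have thlam_le : th * lam n.-1 <= (1 + theta n.-1) / th * lam n.-1.
  have thth : th * th <= 1 by apply: mulr_ile1 => //; exact: ltW.
  by rewrite ler_pM2r // ler_pdivlMr // (le_trans thth) // lerDl ltW.
exists th; first by rewrite th0 th1.
set yn' := x n + th *: (x n - x n.-1).
have lf_ge : th * lam n.-1 <= lf yn' th.
  by apply: min_ratio_lipschitz_ge; rewrite // le_min thlam_le.
split=> //; exists (th * lam n.-1); first by rewrite lexx lf_ge.
exact: lipschitz_op_scaled_dist.
Qed.
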